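(* Let $r\ge2$ and let $\mathbf L^{\mathrm{MAP}}\in\mathbb R_+^{(2^r-1)\times r!}$ be the matrix with rows indexed by $\mathbf y\in\{0,1\}^r\setminus\{\mathbf 0\}$, columns indexed by $\sigma\in\Pi_r$, and entries \[ \ell^{\mathrm{MAP}}(\mathbf y,\sigma)=1-\frac{1}{\|\mathbf y\|_1}\sum_{i:\,y_i=1}\frac{1}{\sigma(i)}\sum_{j=1}^{\sigma(i)}y_{\sigma^{-1}(j)} . \] Then $\operatorname{rank}(\mathbf L^{\mathrm{MAP}})\ge\frac{r(r-1)}{2}-2$.
   Context: $\Pi_r$ is the set of all permutations (bijections) $\sigma:[r]\to[r]$, where $[r]=\{1,\dots,r\}$ and $\sigma(i)$ is the position of element $i$; $\sigma^{-1}(j)$ is the element placed at position $j$. $\|\mathbf y\|_1=\sum_i|y_i|$. Equivalently, $\ell^{\mathrm{MAP}}(\mathbf y,\sigma)=1-\frac{1}{\|\mathbf y\|_1}\sum_{i=1}^r\sum_{j=1}^{i}\frac{y_iy_j}{\max(\sigma(i),\sigma(j))}$. *)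

From HB Require Import structures.
From mathcomp Require Import all_boot all_order all_algebra all_fingroup.
Set Implicit Arguments. Unset Strict Implicit. Unset Printing Implicit Defensive.
Import Order.TTheory GRing.Theory Num.Theory.
Local Open Scope ring_scope.

(* Row index set: nonzero y in {0,1}^r, encoded as the nonempty subsets
   {i | y_i = 1} of 'I_r. *)
Definition nzY (r : nat) : {set {set 'I_r}} := [set y : {set 'I_r} | y != set0].

(* A permutation s : {perm 'I_r}; the (1-based) position of element i is
   sigma(i) = s i + 1, and the element at (0-based) position k is s^-1 k. *)
Definition lMAP (R : realFieldType) (r : nat) (y : {set 'I_r}) (s : {perm 'I_r}) : R :=
  1 - (#|y|%:R)^-1 *
      \sum_(i in y) ((s i).+1%:R)^-1 *
        \sum_(k : 'I_r | (k <= s i)%N) ((((s^-1)%g k) \in y) : nat)%:R.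

(* The (2^r - 1) x r! matrix; rows/columns enumerated via enum_val
   (the rank does not depend on the chosen enumeration). *)
Definition LMAP (R : realFieldType) (r : nat) : 'M[R]_(#|nzY r|, #|{perm 'I_r}|) :=
  \matrix_(a, b) lMAP R (enum_val a) (enum_val b).

From HB Require Import structures.
From mathcomp Require Import all_boot all_order all_algebra all_fingroup.
From mathcomp Require Import ring lra zify.
Set Implicit Arguments. Unset Strict Implicit. Unset Printing Implicit Defensive.
Import Order.TTheory GRing.Theory Num.Theory.
Local Open Scope ring_scope.

(* The combination L{a} + L{b} - 2 L{a,b} of rows of L^MAP is the row
   s |-> 1 / (1 + max(s a, s b)), the reciprocal of the last position (1-based)
   of the pair {a, b}.  These C(r,2) rows are linearly independent: in a
   vanishing combination, put c, a, b at positions 1, 2, 3 and exchange a and b;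
   only the entries of {c,a} and {c,b} change, so pairs sharing an element get
   equal weights, all weights are equal, and they vanish because every entry is
   positive. *)

Section Entries.
Variables (R : realFieldType) (r : nat).
Implicit Types (s : {perm 'I_r}) (a b : 'I_r).

Lemma sum_prefix_permV_eq s a (p : nat) :
  \sum_(k : 'I_r | (k <= p)%N) (((s^-1)%g k == a) : nat)%:R = ((s a <= p)%N : nat)%:R :> R.
Proof.
rewrite (eq_bigr (fun k => ((k == s a) : nat)%:R)); last first.
  by move=> k _; rewrite -(inj_eq (@perm_inj _ s)) permKV.
have [le_ap|lt_pa] := leqP (s a) p.
  by rewrite (bigD1 (s a)) //= eqxx big1 ?addr0 // => k /andP[_ /negbTE->].
by rewrite big1 // => k le_kp; case: eqP => // e; move: le_kp; rewrite e leqNgt lt_pa.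
Qed.

Lemma lMAP_set1 s a : lMAP R [set a] s = 1 - ((s a).+1%:R)^-1.
Proof.
rewrite /lMAP cards1 invr1 mul1r big_set1.
under eq_bigr do rewrite in_set1.
by rewrite sum_prefix_permV_eq leqnn mulr1.
Qed.

Lemma lMAP_set2 s a b : a != b ->
  lMAP R [set a; b] s = 1 - 2^-1 *
    (((s a).+1%:R)^-1 + ((s b).+1%:R)^-1 + ((maxn (s a) (s b)).+1%:R)^-1).
Proof.
move=> neq_ab.
have prefix_count p : \sum_(k : 'I_r | (k <= p)%N) (((s^-1)%g k \in [set a; b]) : nat)%:R
    = ((s a <= p)%N : nat)%:R + ((s b <= p)%N : nat)%:R :> R.
  rewrite -!sum_prefix_permV_eq -big_split /=; apply: eq_bigr => k _.
  rewrite in_set2; case: eqP => [->|_]; last by rewrite add0r.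
  by rewrite (negbTE neq_ab) addr0.
rewrite /lMAP cards2 neq_ab big_setU1 ?inE //= big_set1 !prefix_count !leqnn.
have neq_sab : (s a != s b :> nat) by rewrite val_eqE (inj_eq perm_inj).
by case: (ltngtP (s a) (s b)) neq_sab => //= _ _; ring.
Qed.

Lemma lMAP_pair_comb s a b : a != b ->
  lMAP R [set a] s + lMAP R [set b] s - 2 * lMAP R [set a; b] s
    = ((maxn (s a) (s b)).+1%:R)^-1.
Proof.
by move=> neq_ab; rewrite !lMAP_set1 lMAP_set2 //; field; rewrite !nat1r !pnatr_eq0.
Qed.

End Entries.

Section PairCombination.
Variables (R : realFieldType) (r : nat).

Definition pair_coef (y z : {set 'I_r}) : R :=
  ((#|z| == 1%N) && (z \subset y) : nat)%:R - 2 * ((z == y) : nat)%:R.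

Lemma sum_pair_coef (F : {set 'I_r} -> R) (y : {set 'I_r}) : y \in nzY r ->
  \sum_(z in nzY r) pair_coef y z * F z = \sum_(x in y) F [set x] - 2 * F y.
Proof.
move=> nzy; under eq_bigr do rewrite mulrBl -mulrA.
rewrite sumrB -mulr_sumr; congr (_ - 2 * _); last first.
  rewrite (bigD1 y) //= eqxx mul1r big1 ?addr0 // => z /andP[_ /negbTE->].
  by rewrite mul0r.
rewrite -(big_imset _ (in2W set1_inj)) /= big_mkcond [RHS]big_mkcond /=.
apply: eq_bigr => z _; rewrite inE; case: imsetP => [[x xy ->]|not_set1].
  by rewrite -card_gt0 cards1 sub1set xy mul1r.
case: (z != set0); rewrite ?mulr0 //=.
case: cards1P => [[x def_z]|_]; last by rewrite mul0r.
rewrite def_z sub1set; case: (boolP (x \in y)) => [xy|]; last by rewrite mul0r.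
by case: not_set1; exists x.
Qed.

End PairCombination.

Section MaxPosition.
Variables (R : realFieldType) (r : nat).
Implicit Types (y : {set 'I_r}) (s : {perm 'I_r}).

Definition pairs : {set {set 'I_r}} := [set y : {set 'I_r} | #|y| == 2%N].

Definition maxpos_inv y s : R :=
  ((\max_(x in y) s x).+1%:R)^-1.

Lemma set2_in_pairs (a b : 'I_r) : a != b -> [set a; b] \in pairs.
Proof. by move=> neq_ab; rewrite inE cards2 neq_ab. Qed.

Lemma maxpos_inv_set2 (a b : 'I_r) s : a != b ->
  maxpos_inv [set a; b] s = ((maxn (s a) (s b)).+1%:R)^-1.
Proof. by move=> neq_ab; rewrite /maxpos_inv big_setU1 ?big_set1 ?inE. Qed.

Lemma sum_pair_coef_lMAP y s : y \in pairs ->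
  \sum_(z in nzY r) pair_coef R y z * lMAP R z s = maxpos_inv y s.
Proof.
rewrite inE => /cards2P[a [b [neq_ab ->]]].
have nz_ab : [set a; b] \in nzY r by rewrite inE -card_gt0 cards2 neq_ab.
rewrite sum_pair_coef // big_setU1 ?big_set1 ?inE //=.
by rewrite lMAP_pair_comb // maxpos_inv_set2.
Qed.

Definition maxpos_mx : 'M[R]_(#|pairs|, #|{perm 'I_r}|) :=
  \matrix_(i, j) maxpos_inv (enum_val i) (enum_val j).

Definition pair_coef_mx : 'M[R]_(#|pairs|, #|nzY r|) :=
  \matrix_(i, k) pair_coef R (enum_val i) (enum_val k).

Lemma maxpos_mx_factor : maxpos_mx = pair_coef_mx *m LMAP R r.
Proof.
apply/matrixP => i j; rewrite !mxE -sum_pair_coef_lMAP ?enum_valP //.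
under [RHS]eq_bigr do rewrite !mxE.
exact: big_enum_val.
Qed.

End MaxPosition.

Lemma exists_perm3 (T : finType) (a b c p q t : T) :
  a != b -> a != c -> b != c -> p != q -> p != t -> q != t ->
  exists s : {perm T}, [/\ s a = p, s b = q & s c = t].
Proof.
move=> neq_ab neq_ac neq_bc neq_pq neq_pt neq_qt.
pose s1 := tperm a p; pose s2 := tperm (s1 b) q; pose s3 := tperm (s2 (s1 c)) t.
have s1a : s1 a = p by rewrite tpermL.
have s2p : s2 p = p.
  by rewrite tpermD // 1?eq_sym // -s1a (inj_eq perm_inj).
have s2s1b : s2 (s1 b) = q by rewrite tpermL.
exists (s1 * s2 * s3)%g; rewrite !permM s1a s2p s2s1b tpermL; split=> //.
- rewrite tpermD ?(eq_sym t) //.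
  by rewrite -[X in _ != X]s2p (inj_eq perm_inj) -s1a (inj_eq perm_inj) eq_sym.
- rewrite tpermD ?(eq_sym t) //.
  by rewrite -[X in _ != X]s2s1b !(inj_eq perm_inj) eq_sym.
Qed.

Definition swap12 (u : nat) : nat := (if u == 1 then 2 else if u == 2 then 1 else u)%N.

(* The side condition excludes exactly the pairs of positions {0,1} and {0,2}. *)
Lemma maxn_swap12 (u w : nat) : u != w -> ((0 < minn u w) || (2 < maxn u w))%N ->
  maxn (swap12 u) (swap12 w) = maxn u w.
Proof. by rewrite /swap12; repeat case: eqP => ? /=; lia. Qed.

Lemma val_tperm12 n (p q x : 'I_n) : val p = 1%N -> val q = 2%N ->
  val (tperm p q x) = swap12 x.
Proof.
move=> vp vq; rewrite /swap12.
have [->|nxp] := eqVneq x p; first by rewrite tpermL vp vq.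
have [->|nxq] := eqVneq x q; first by rewrite tpermR vp vq.
rewrite tpermD ?(eq_sym p) ?(eq_sym q) //.
have /negbTE-> : val x != 1%N by rewrite -vp val_eqE.
by have /negbTE-> : val x != 2%N by rewrite -vq val_eqE.
Qed.

Section SwapSecondThird.
Variables (R : realFieldType) (r : nat) (a b c : 'I_r) (s : {perm 'I_r}).
Hypotheses (sa : s a = 1%N :> nat) (sb : s b = 2%N :> nat) (sc : s c = 0%N :> nat).

Lemma maxpos_inv_swap12 y : y \in pairs r -> y != [set c; a] -> y != [set c; b] ->
  maxpos_inv R y (s * tperm (s a) (s b)) = maxpos_inv R y s.
Proof.
rewrite inE => /cards2P[x [z [neq_xz ->]]] ne_ca ne_cb.
have neq_pos u v : u != v -> (s u : nat) != s v.
  by rewrite (inj_eq val_inj) (inj_eq perm_inj).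
have pos_gt2 u : u != c -> [set c; u] != [set c; a] -> [set c; u] != [set c; b] ->
    (2 < s u)%N.
  move=> /neq_pos + ne_a ne_b; rewrite sc.
  have /neq_pos : u != a by apply: contraNneq ne_a => ->.
  have /neq_pos : u != b by apply: contraNneq ne_b => ->.
  by rewrite sa sb; lia.
rewrite !maxpos_inv_set2 // !permM !val_tperm12 // maxn_swap12 ?neq_pos //.
have [exc|nxc] := eqVneq x c; last have [ezc|nzc] := eqVneq z c.
- subst x; have := pos_gt2 z; rewrite eq_sym sc => /(_ neq_xz ne_ca ne_cb); lia.
- subst z; rewrite setUC in ne_ca ne_cb.
  by have := pos_gt2 x neq_xz ne_ca ne_cb; rewrite sc; lia.
- by have := neq_pos _ _ nxc; have := neq_pos _ _ nzc; rewrite sc; lia.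
Qed.

End SwapSecondThird.

Section Annihilator.
Variables (R : realFieldType) (r : nat) (w : {set 'I_r} -> R).
Hypothesis w_ann : forall s, \sum_(y in pairs r) w y * maxpos_inv R y s = 0.

Lemma annihilator_swap (a b c : 'I_r) : a != b -> a != c -> b != c ->
  w [set c; a] = w [set c; b].
Proof.
move=> neq_ab neq_ac neq_bc.
have lt2r : (2 < r)%N.
  move: neq_ab neq_ac neq_bc (ltn_ord a) (ltn_ord b) (ltn_ord c).
  by rewrite -!val_eqE /=; lia.
have [lt0r lt1r] : (0 < r)%N /\ (1 < r)%N by lia.
have [s [sa sb sc]] := @exists_perm3 _ a b c (Ordinal lt1r) (Ordinal lt2r) (Ordinal lt0r)
  neq_ab neq_ac neq_bc isT isT isT.
have [{}sa {}sb {}sc] : [/\ s a = 1%N :> nat, s b = 2%N :> nat & s c = 0%N :> nat].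
  by rewrite sa sb sc.
have ne_cb_ca : [set c; b] != [set c; a].
  apply/eqP => eq_cb_ca; have := set22 c b.
  by rewrite eq_cb_ca !inE (negbTE neq_bc) eq_sym (negbTE neq_ab).
have : \sum_(y in pairs r)
    w y * (maxpos_inv R y s - maxpos_inv R y (s * tperm (s a) (s b))) = 0.
  by under eq_bigr do rewrite mulrBr; rewrite sumrB !w_ann subrr.
rewrite (bigD1 [set c; a]) ?set2_in_pairs 1?eq_sym //=.
rewrite (bigD1 [set c; b]) /= ?ne_cb_ca ?set2_in_pairs 1?eq_sym //=.
rewrite big1 ?addr0 => [|y /andP[/andP[py ne_ca] ne_cb]]; last first.
  by rewrite (maxpos_inv_swap12 _ sa sb sc) // subrr mulr0.
rewrite !maxpos_inv_set2 1?eq_sym // !permM !val_tperm12 // sa sb sc /swap12 /maxn /=.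
lra.
Qed.

Lemma annihilator_const y y' : y \in pairs r -> y' \in pairs r -> w y = w y'.
Proof.
have share_first a b d : a != b -> a != d -> w [set a; b] = w [set a; d].
  move=> neq_ab neq_ad; have [<-//|neq_bd] := eqVneq b d.
  by apply: annihilator_swap; rewrite // eq_sym.
have any_pair a b c d : a != b -> c != d -> w [set a; b] = w [set c; d].
  move=> neq_ab neq_cd; have [eq_ca|neq_ca] := eqVneq c a.
    by subst c; exact: share_first.
  have -> : w [set a; b] = w [set a; c] by apply: share_first; rewrite // eq_sym.
  by rewrite setUC; apply: share_first.
rewrite !inE => /cards2P[a [b [neq_ab ->]]] /cards2P[c [d [neq_cd ->]]].
exact: any_pair.
Qed.

Lemma annihilator_eq0 y : y \in pairs r -> w y = 0.
Proof.
move=> py; have := w_ann 1%g.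
under eq_bigr => z pz do rewrite (annihilator_const pz py).
rewrite -mulr_sumr => /eqP; rewrite mulf_eq0 => /orP[/eqP//|/eqP sum0].
have maxpos_ge0 z : z \in pairs r -> 0 <= maxpos_inv R z 1 by rewrite invr_ge0.
by move/eqP: (psumr_eq0P maxpos_ge0 sum0 py); rewrite invr_eq0 pnatr_eq0.
Qed.

End Annihilator.

Lemma row_free_maxpos_mx (R : realFieldType) r : row_free (maxpos_mx R r).
Proof.
apply/inj_row_free => v v0; apply/rowP => i; rewrite mxE.
pose w y := v 0 (enum_rank_in (enum_valP i) y).
have wE j : w (enum_val j) = v 0 j by rewrite /w enum_valK_in.
rewrite -wE; apply: annihilator_eq0 (enum_valP i) => s.
transitivity ((v *m maxpos_mx R r) 0 (enum_rank s)); last by rewrite v0 mxE.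
rewrite mxE (big_enum_val (fun y => w y * maxpos_inv R y s)) /=.
by apply: eq_bigr => j _; rewrite wE mxE enum_rankK.
Qed.

Lemma rank_maxpos_mx (R : realFieldType) r : \rank (maxpos_mx R r) = 'C(r, 2).
Proof. by rewrite (eqP (row_free_maxpos_mx R r)) card_draws card_ord. Qed.

Lemma mul2_bin2 n : (2 * 'C(n, 2) = n * (n - 1))%N.
Proof.
elim: n => // n IHn; rewrite binS bin1 mulnDr IHn subSS subn0.
by case: n {IHn} => // n; rewrite subSS subn0; ring.
Qed.

Theorem mainTheorem17 (R : realFieldType) (r : nat) (hr : (2 <= r)%N) :
  (r * (r - 1) <= 2 * (\rank (LMAP R r) + 2))%N.
Proof.
have rank_ge : ('C(r, 2) <= \rank (LMAP R r))%N.
  by rewrite -(rank_maxpos_mx R r) maxpos_mx_factor mxrankM_maxr.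
by rewrite -mul2_bin2 leq_mul2l /= (leq_trans rank_ge) ?leq_addr.
Qed.
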